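(* Let $G$ be a finite simple graph with $V(G)=\{v_1,\dots,v_n\}$, where vertex $v_i$ carries positive integer weight $t_i$. Let $G(v_1,\dots,v_n)$ be the unweighted graph obtained by replacing each $v_i$ by an independent set $I_i$ of $t_i$ new vertices, where a vertex of $I_i$ is adjacent to a vertex of $I_j$ ($i\neq j$) if and only if $v_iv_j\in E(G)$, and no two vertices of the same $I_i$ are adjacent. Then weighted Grim played on $G$ and ordinary Grim played on $G(v_1,\dots,v_n)$ have the same outcome: one is an $\mathcal{N}$ position if and only if the other is.
   Context: Grim is a two-player game on a finite simple undirected graph. Any isolated vertices of the starting graph are deleted before play begins. Players alternate moves; in ordinary (unweighted) Grim a move consists of selecting a vertex of the current graph and deleting it together with all its incident edges, after which every vertex that has become isolated is also deleted. The player who makes the last legal move wins (a player facing the empty graph has no move and loses). In weighted Grim each vertex carries a positive integer weight; a vertex of weight $t$ is deleted only once it has been selected $t$ times (each selection is a move and lowers its remaining weight by one, the selection that brings it to zero deleting it with its incident edges), or when it becomes isolated, in which case it is deleted. A position is an $\mathcal{N}$ position if the player about to move has a winning strategy, and a $\mathcal{P}$ position otherwise. *)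

From mathcomp Require Import all_boot.
Set Implicit Arguments. Unset Strict Implicit. Unset Printing Implicit Defensive.

(* Generic impartial game under normal play, given by a move relation.
   [Nwin s]: the player to move from s has a winning strategy (N position);
   [Ppos s]: every move from s leads to an N position (P position).
   All games considered here are finite (every play terminates). *)
Section Game.
Variables (S : Type) (move : S -> S -> Prop).
Inductive Nwin : S -> Prop :=
  Nwin_intro s s' : move s s' -> Ppos s' -> Nwin s
with Ppos : S -> Prop :=
  Ppos_intro s : (forall s', move s s' -> Nwin s') -> Ppos s.
End Game.

Section Grim.
Variables (T : finType) (e : rel T).

Definition isolated (A : {set T}) (v : T) : bool := [forall u in A, ~~ e v u].

Definition clean (A : {set T}) : {set T} := [set v in A | ~~ isolated A v].

(* Ordinary Grim: a position is the vertex set of the current (induced) graph. *)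
Definition grim_move (A A' : {set T}) : Prop :=
  exists2 v, v \in A & A' = clean (A :\ v).

Definition grim_start : {set T} := clean [set: T].

(* Weighted Grim: a position is the current vertex set together with the
   remaining weights of the vertices. *)
Definition wgrim_move (p p' : {set T} * (T -> nat)) : Prop :=
  exists2 v, v \in p.1 &
    p' = if 1 < p.2 v
         then (p.1, fun u => if u == v then (p.2 v).-1 else p.2 u)
         else (clean (p.1 :\ v), p.2).

Definition wgrim_start (w : T -> nat) : {set T} * (T -> nat) := (clean [set: T], w).
End Grim.

Definition blowup (T : finType) (w : T -> nat) : finType := {v : T & 'I_(w v)}.

Definition blowup_rel (T : finType) (e : rel T) (w : T -> nat) : rel (blowup w) :=
  fun x y => e (tag x) (tag y).
Arguments blowup_rel [T] e w _ _.

From mathcomp Require Import all_boot.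

Set Implicit Arguments. Unset Strict Implicit. Unset Printing Implicit Defensive.

(* A weighted position (A, r) corresponds to every position X of the blow-up
   whose fibre over a vertex u has r u elements if u is in A and is empty
   otherwise.  Whether a copy of u is isolated in X depends only on u, so
   deleting isolated vertices commutes with this correspondence, and deleting
   one copy of v amounts to selecting v once.  Hence the correspondence is a
   bisimulation between the two games, and bisimilar positions have the same
   outcome. *)

Scheme Nwin_mind := Induction for Nwin Sort Prop
  with Ppos_mind := Induction for Ppos Sort Prop.

Definition bisimulation S1 S2 (m1 : S1 -> S1 -> Prop) (m2 : S2 -> S2 -> Prop)
    (R : S1 -> S2 -> Prop) :=
  (forall s t s', R s t -> m1 s s' -> exists2 t', m2 t t' & R s' t') /\
  (forall s t t', R s t -> m2 t t' -> exists2 s', m1 s s' & R s' t').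

Lemma bisimulation_sym S1 S2 (m1 : S1 -> S1 -> Prop) (m2 : S2 -> S2 -> Prop) R :
  bisimulation m1 m2 R -> bisimulation m2 m1 (fun t s => R s t).
Proof.
case=> fwd bwd; split=> [t s t' Rst /(bwd _ _ _ Rst) | t s s' Rst /(fwd _ _ _ Rst)].
  by case=> s' ms' Rs't'; exists s'.
by case=> t' mt' Rs't'; exists t'.
Qed.

Lemma Nwin_bisim S1 S2 (m1 : S1 -> S1 -> Prop) (m2 : S2 -> S2 -> Prop) R s t :
  bisimulation m1 m2 R -> R s t -> Nwin m1 s -> Nwin m2 t.
Proof.
case=> fwd bwd Rst Ns; move: s Ns t Rst.
apply: (@Nwin_mind S1 m1 (fun s _ => forall t, R s t -> Nwin m2 t)
                         (fun s _ => forall t, R s t -> Ppos m2 t)).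
- move=> s s' ms' _ IH t Rst.
  have [t' mt' Rs't'] := fwd _ _ _ Rst ms'.
  exact: Nwin_intro mt' (IH _ Rs't').
- move=> s _ IH t Rst; constructor=> t' mt'.
  have [s' ms' Rs't'] := bwd _ _ _ Rst mt'.
  exact: IH _ ms' _ Rs't'.
Qed.

Lemma Nwin_bisim_iff S1 S2 (m1 : S1 -> S1 -> Prop) (m2 : S2 -> S2 -> Prop) R s t :
  bisimulation m1 m2 R -> R s t -> Nwin m1 s <-> Nwin m2 t.
Proof.
move=> bR Rst; split; first exact: Nwin_bisim bR Rst.
exact: Nwin_bisim (bisimulation_sym bR) Rst.
Qed.

Section Clean.
Variables (T : finType) (e : rel T).
Hypothesis e_sym : symmetric e.

Lemma clean_idem A : clean e (clean e A) = clean e A.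
Proof.
apply/setP=> v; rewrite [in LHS]inE andb_idr // inE => /andP[vA].
case/forallPn=> u; rewrite negb_imply negbK => /andP[uA evu].
apply/forallPn; exists u; rewrite negb_imply negbK evu andbT inE uA /=.
by apply/forallPn; exists v; rewrite negb_imply negbK vA e_sym evu.
Qed.

End Clean.

Section BlowupGrim.
Variables (T : finType) (e : rel T) (w : T -> nat).
Hypothesis e_sym : symmetric e.

Local Notation E := (blowup_rel e w).

Definition fibre_card (X : {set blowup w}) v := #|[set y in X | tag y == v]|.

Lemma fibre_card_setT v : fibre_card [set: blowup w] v = w v.
Proof.
rewrite /fibre_card.
have -> : [set y in [set: blowup w] | tag y == v] =
          (@Tagged T v (fun v => 'I_(w v))) @: [set: 'I_(w v)].
  apply/setP=> y; rewrite !inE; apply/eqP/imsetP => [|[i _ ->] //].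
  by case: y => u i /= Eu; subst; exists i; rewrite ?in_setT.
by rewrite card_imset ?cardsT ?card_ord // => i j; apply: eq_from_Tagged.
Qed.

Lemma fibre_card_setD1 (X : {set blowup w}) x u :
  x \in X -> fibre_card (X :\ x) u = fibre_card X u - (tag x == u).
Proof.
move=> xX; rewrite /fibre_card.
have -> : [set y in X :\ x | tag y == u] = [set y in X | tag y == u] :\ x.
  by apply/setP=> y; rewrite !inE andbA.
by rewrite (cardsD1 x [set y in X | tag y == u]) inE xX addKn.
Qed.

Lemma fibre_card_gt0 (X : {set blowup w}) x : x \in X -> 0 < fibre_card X (tag x).
Proof. by move=> xX; apply/card_gt0P; exists x; rewrite inE xX eqxx. Qed.

Definition blowup_of (A : {set T}) (r : T -> nat) (X : {set blowup w}) :=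
  (forall u, (u \in A) = (0 < fibre_card X u)) /\
  (forall u, u \in A -> r u = fibre_card X u).

Section Support.
Variables (A : {set T}) (X : {set blowup w}).
Hypothesis suppX : forall u, (u \in A) = (0 < fibre_card X u).

Lemma isolated_blowup y : isolated E X y = isolated e A (tag y).
Proof.
apply/forallP/forallP=> isoy u; apply/implyP.
- rewrite suppX => /card_gt0P[z]; rewrite inE => /andP[zX /eqP <-].
  exact: implyP (isoy z) zX.
- by move=> uX; apply: implyP (isoy (tag u)) _; rewrite suppX fibre_card_gt0.
Qed.

Lemma fibre_card_clean u :
  fibre_card (clean E X) u = if isolated e A u then 0 else fibre_card X u.
Proof.
rewrite /fibre_card /clean; case: ifP => isou.
  apply/eqP; rewrite cards_eq0; apply/eqP/setP=> y; rewrite !inE.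
  by case: eqP => [yu|]; rewrite ?isolated_blowup ?yu ?isou !andbF.
apply: eq_card => y; rewrite !inE isolated_blowup.
by case: eqP => [->|]; rewrite ?isou ?andbT ?andbF.
Qed.

End Support.

Lemma blowup_of_clean A r X :
  blowup_of A r X -> blowup_of (clean e A) r (clean E X).
Proof.
case=> suppX rX; split=> u; rewrite (fibre_card_clean suppX) inE.
  by rewrite suppX; case: (isolated e A u); rewrite ?andbF ?andbT.
by case/andP=> uA /negbTE ->; apply: rX.
Qed.

Definition grim_sim (p : {set T} * (T -> nat)) X :=
  clean e p.1 = p.1 /\ blowup_of p.1 p.2 X.

Definition wgrim_next (p : {set T} * (T -> nat)) v :=
  if 1 < p.2 v then (p.1, fun u => if u == v then (p.2 v).-1 else p.2 u)
  else (clean e (p.1 :\ v), p.2).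

Lemma grim_sim_next p X x : grim_sim p X -> x \in X ->
  grim_sim (wgrim_next p (tag x)) (clean E (X :\ x)).
Proof.
case: p => A r [/= cleanA [suppX rX]] xX; set v := tag x.
have vA : v \in A by rewrite suppX fibre_card_gt0.
have rv : r v = fibre_card X v by apply: rX.
rewrite /wgrim_next /=; case: ifP => rv_gt1.
- split=> //=; rewrite -{1}cleanA; apply: blowup_of_clean; split=> u.
    rewrite fibre_card_setD1 // suppX; case: (eqVneq v u) => [<-|_].
      by rewrite -rv subn_gt0 rv_gt1 ltnW.
    by rewrite /= subn0.
  move=> uA; rewrite fibre_card_setD1 // -rX //.
  by case: (eqVneq v u) => [<-|] /=; rewrite ?subn1 ?subn0.
- split; first exact: clean_idem.
  apply: blowup_of_clean; split=> u; rewrite !inE fibre_card_setD1 //.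
    case: (eqVneq v u) => [<-|_]; last by rewrite subn0 -suppX.
    by rewrite -rv subn_gt0 rv_gt1.
  by case/andP=> uv uA; rewrite eq_sym (negbTE uv) subn0 -rX.
Qed.

Lemma grim_sim_bisimulation :
  bisimulation (wgrim_move e) (grim_move E) grim_sim.
Proof.
split.
- move=> [A r] X _ simAX [v vA ->].
  have [_ [suppX _]] := simAX.
  move: (vA); rewrite /= suppX => /card_gt0P[x]; rewrite inE => /andP[xX /eqP vx].
  exists (clean E (X :\ x)); first by exists x.
  by have := grim_sim_next simAX xX; rewrite vx.
- move=> [A r] X _ simAX [x xX ->].
  exists (wgrim_next (A, r) (tag x)); last exact: grim_sim_next.
  have [_ [suppX _]] := simAX.
  by exists (tag x); rewrite //= suppX fibre_card_gt0.
Qed.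

Lemma grim_sim_start : (forall v, 0 < w v) ->
  grim_sim (wgrim_start e w) (grim_start E).
Proof.
move=> w_pos; split; first exact: clean_idem.
by apply: blowup_of_clean; split=> u; rewrite fibre_card_setT ?inE ?w_pos.
Qed.

End BlowupGrim.

Theorem theorem2p3 (T : finType) (e : rel T)
  (e_sym : symmetric e) (e_irr : irreflexive e)
  (w : T -> nat) (w_pos : forall v, 0 < w v) :
  Nwin (@wgrim_move T e) (wgrim_start e w) <->
  Nwin (@grim_move (blowup w) (blowup_rel e w)) (grim_start (blowup_rel e w)).
Proof.
exact: Nwin_bisim_iff (grim_sim_bisimulation w e_sym) (grim_sim_start e_sym w_pos).
Qed.
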